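(* Assume the Lipschitz condition on $f_t,r_t$. Then the operator $\mathcal{B}^{\mathrm{RQE}}_{\mathrm{prop}}$ is Lipschitz: there is a constant $K_{\mathrm{prop}}>0$ such that for all $\pi_a,\pi_b\in\Pi$, $d_{\mathcal{S}}(\mathcal{B}^{\mathrm{RQE}}_{\mathrm{prop}}(\pi_a),\mathcal{B}^{\mathrm{RQE}}_{\mathrm{prop}}(\pi_b))\le K_{\mathrm{prop}}\,d_\Pi(\pi_a,\pi_b)$.
   Context: Let $\mathcal{X},\mathcal{U}$ be finite nonempty sets and $T\ge1$. $\mathcal{P}(E)$ is the set of probability vectors on finite $E$ and $d_{TV}(\mu,\mu')=\frac12\|\mu-\mu'\|_1$. For $t\in\{0,\dots,T-1\}$: kernels $f_t(x'\mid x,u,\mu)$ (a distribution over $x'$ for each $x,u,\mu$) and rewards $r_t:\mathcal{X}\times\mathcal{U}\times\mathcal{P}(\mathcal{X})\to[-R_{\max},R_{\max}]$ with $\sum_{x'}|f_t(x'\mid x,u,\mu)-f_t(x'\mid x,u,\mu')|\le L_fd_{TV}(\mu,\mu')$ and $|r_t(x,u,\mu)-r_t(x,u,\mu')|\le L_rd_{TV}(\mu,\mu')$, $L_f,L_r>0$. A policy is $\pi=(\pi_0,\dots,\pi_{T-1})$ with $\pi_t(\cdot\mid x)\in\mathcal{P}(\mathcal{U})$; $\Pi$ is the set of policies and $d_\Pi(\pi,\pi')=\max_{x,t<T}d_{TV}(\pi_t(\cdot\mid x),\pi'_t(\cdot\mid x))$. Given $\pi$ and $\mu_0$, the mean-field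 flow satisfies $\mu_{t+1}(x')=\sum_x\sum_uf_t(x'\mid x,u,\mu_t)\pi_t(u\mid x)\mu_t(x)$. Given a finite set $\mathbb{M}=\{\mu_0^1,\dots,\mu_0^K\}\subset\mathcal{P}(\mathcal{X})$, $\mathcal{B}^{\mathrm{RQE}}_{\mathrm{prop}}(\pi)=\{\mu^1,\dots,\mu^K\}$ where $\mu^k$ is the flow generated by $\pi$ from $\mu_0^k$; for two such sets, $d_{\mathcal{S}}(\mathcal{S}^1,\mathcal{S}^2)=\max_{k\le K,\,t<T}d_{TV}(\mu^{1,k}_t,\mu^{2,k}_t)$. *)

From mathcomp Require Import all_boot all_order all_algebra.
Set Implicit Arguments. Unset Strict Implicit. Unset Printing Implicit Defensive.
Import Order.TTheory GRing.Theory Num.Theory.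
Local Open Scope ring_scope.

Section MFG.
Variable R : realFieldType.

Definition is_prob (E : finType) (mu : {ffun E -> R}) : Prop :=
  (forall e, 0 <= mu e) /\ \sum_(e : E) mu e = 1.

Definition dTV (E : finType) (mu nu : {ffun E -> R}) : R :=
  2^-1 * \sum_(e : E) `|mu e - nu e|.

Variables (X U : finType).

(* kernel: f t x u mu is a (vector) distribution over x' *)
Definition kernel := nat -> X -> U -> {ffun X -> R} -> {ffun X -> R}.
Definition reward := nat -> X -> U -> {ffun X -> R} -> R.
Definition policy := nat -> X -> {ffun U -> R}.

Definition is_policy (T : nat) (pi : policy) : Prop :=
  forall t x, (t < T)%N -> is_prob (pi t x).

Definition dPi (T : nat) (pi pi' : policy) : R :=
  \big[Num.max/0]_(t < T) \big[Num.max/0]_(x : X) dTV (pi t x) (pi' t x).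

Fixpoint flow (f : kernel) (pi : policy) (mu0 : {ffun X -> R}) (t : nat)
  : {ffun X -> R} :=
  match t with
  | 0 => mu0
  | s.+1 =>
      let mu := flow f pi mu0 s in
      [ffun x' => \sum_(x : X) \sum_(u : U) f s x u mu x' * pi s x u * mu x]
  end.

(* B_prop^RQE(pi) = {mu^1, ..., mu^K}, mu^k the flow from mu_0^k *)
Definition Bprop (K : nat) (f : kernel) (M : 'I_K -> {ffun X -> R})
  (pi : policy) : 'I_K -> nat -> {ffun X -> R} :=
  fun k => flow f pi (M k).

Definition dS (K T : nat) (S1 S2 : 'I_K -> nat -> {ffun X -> R}) : R :=
  \big[Num.max/0]_(k < K) \big[Num.max/0]_(t < T) dTV (S1 k t) (S2 k t).

End MFG.

From mathcomp Require Import all_boot all_order all_algebra.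
From mathcomp Require Import ring lra.
Import Order.TTheory GRing.Theory Num.Theory.
Set Implicit Arguments. Unset Strict Implicit. Unset Printing Implicit Defensive.
Local Open Scope ring_scope.

(* One step of the mean-field flow is trilinear in the kernel, the policy and
   the current distribution, so the l1 distance between two steps splits into
   three terms, bounded by L_f d_TV(mu, mu'), 2 d_Pi and 2 d_TV(mu, mu').
   Hence D_t, the d_TV distance of the two flows at time t, satisfies D_0 = 0
   and D_(t+1) <= c D_t + d_Pi with c = (L_f + 2) / 2, which gives
   D_t <= (c^0 + ... + c^(T-1)) d_Pi for t < T. *)

Section Geometric.
Variable R : realFieldType.

Lemma le_geometric_recursion (c d : R) (D : nat -> R) (n : nat) :
  0 <= c -> D 0 <= 0 -> (forall s, (s < n)%N -> D s.+1 <= c * D s + d) ->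
  forall t, (t <= n)%N -> D t <= (\sum_(i < t) c ^+ i) * d.
Proof.
move=> c_ge0 D0 Dstep; elim=> [|t IH] tn; first by rewrite big_ord0 mul0r.
rewrite big_ord_recl expr0 mulrDl mul1r addrC.
under eq_bigr => i _ do rewrite /= exprS.
rewrite -mulr_sumr -mulrA.
apply: le_trans (Dstep t tn) _; rewrite lerD2r.
exact/ler_wpM2l/IH/ltnW.
Qed.

Lemma geometric_sum_widen (c : R) (t n : nat) :
  0 <= c -> (t <= n)%N -> \sum_(i < t) c ^+ i <= \sum_(i < n) c ^+ i.
Proof.
move=> c_ge0 tn; rewrite (big_ord_widen n (fun i => c ^+ i) tn) big_mkcond /=.
by apply: ler_sum => i _; case: ifP => // _; exact: exprn_ge0.
Qed.

End Geometric.

Section MeanFieldStep.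
Variables (R : realFieldType) (X U : finType).

Definition mf_step (F : X -> U -> {ffun X -> R}) (P : X -> {ffun U -> R})
    (m : {ffun X -> R}) : {ffun X -> R} :=
  [ffun x' => \sum_x \sum_u F x u x' * P x u * m x].

Lemma sum_norm_prob (E : finType) (mu : {ffun E -> R}) :
  is_prob mu -> \sum_e `|mu e| = 1.
Proof.
by case=> mu_ge0 mu1; rewrite -mu1; apply: eq_bigr => e _; rewrite ger0_norm.
Qed.

Lemma prob_avg_le (E : finType) (mu : {ffun E -> R}) (g : E -> R) (B : R) :
  is_prob mu -> (forall e, g e <= B) -> \sum_e mu e * g e <= B.
Proof.
case=> mu_ge0 mu1 gB; apply: le_trans (_ : \sum_e mu e * B <= B).
  by apply: ler_sum => e _; exact: ler_wpM2l.
by rewrite -mulr_suml mu1 mul1r.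
Qed.

Lemma mf_step_prob F P m :
  (forall x u, is_prob (F x u)) -> (forall x, is_prob (P x)) -> is_prob m ->
  is_prob (mf_step F P m).
Proof.
move=> hF hP [m_ge0 m1]; split.
  move=> x'; rewrite ffunE; apply: sumr_ge0 => x _; apply: sumr_ge0 => u _.
  by rewrite !mulr_ge0 //; [exact: (hF x u).1 | exact: (hP x).1].
under eq_bigr => x' _ do rewrite ffunE.
rewrite exchange_big -m1; apply: eq_bigr => x _.
rewrite exchange_big /=; transitivity (\sum_u P x u * m x).
  by apply: eq_bigr => u _; rewrite -!mulr_suml (hF x u).2 mul1r.
by rewrite -mulr_suml (hP x).2 mul1r.
Qed.

Lemma l1_mf_step_le F P m :
  \sum_x' `|mf_step F P m x'|
    <= \sum_x `|m x| * \sum_u `|P x u| * \sum_x' `|F x u x'|.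
Proof.
apply: (@le_trans _ _
  (\sum_(x' : X) \sum_(x : X) \sum_(u : U) `|F x u x'| * `|P x u| * `|m x|)).
  apply: ler_sum => x' _; rewrite ffunE.
  apply: le_trans (ler_norm_sum _ _ _) _; apply: ler_sum => x _.
  apply: le_trans (ler_norm_sum _ _ _) _; apply: ler_sum => u _.
  by rewrite !normrM.
rewrite exchange_big; apply: ler_sum => x _.
rewrite exchange_big mulr_sumr; apply: ler_sum => u _.
rewrite !mulr_sumr; apply: ler_sum => x' _.
by rewrite mulrC (mulrC `|F _ _ _|).
Qed.

Lemma mf_stepB Fa Fb Pa Pb ma mb x' :
  mf_step Fa Pa ma x' - mf_step Fb Pb mb x' =
    mf_step (fun x u => Fa x u - Fb x u) Pa ma x'
  + mf_step Fb (fun x => Pa x - Pb x) ma x'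
  + mf_step Fb Pb (ma - mb) x'.
Proof.
rewrite !ffunE -!big_split -sumrB /=.
apply: eq_bigr => x _; rewrite -!big_split -sumrB /=.
by apply: eq_bigr => u _; rewrite !ffunE; ring.
Qed.

Lemma dTV_mf_step (Fa Fb : X -> U -> {ffun X -> R})
    (Pa Pb : X -> {ffun U -> R}) (ma mb : {ffun X -> R}) (L d : R) :
  (forall x u, is_prob (Fb x u)) ->
  (forall x, is_prob (Pa x)) -> (forall x, is_prob (Pb x)) -> is_prob ma ->
  (forall x u, \sum_x' `|Fa x u x' - Fb x u x'| <= L * dTV ma mb) ->
  (forall x, dTV (Pa x) (Pb x) <= d) ->
  dTV (mf_step Fa Pa ma) (mf_step Fb Pb mb) <= (L + 2) / 2 * dTV ma mb + d.
Proof.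
move=> hFb hPa hPb hma FL Pd.
rewrite {1}/dTV; under eq_bigr => x' _ do rewrite mf_stepB.
set Dk := mf_step (fun x u => Fa x u - Fb x u) Pa ma.
set Dp := mf_step Fb (fun x => Pa x - Pb x) ma.
set Dm := mf_step Fb Pb (ma - mb).
have kernel_term : \sum_x' `|Dk x'| <= L * dTV ma mb.
  apply: le_trans (l1_mf_step_le _ _ _) _.
  under eq_bigr => x _ do rewrite (ger0_norm (hma.1 x)).
  apply: (prob_avg_le hma) => x.
  under eq_bigr => u _ do rewrite (ger0_norm ((hPa x).1 u)).
  apply: (prob_avg_le (hPa x)) => u.
  under eq_bigr => x' _ do rewrite !ffunE.
  exact: FL.
have policy_term : \sum_x' `|Dp x'| <= 2 * d.
  apply: le_trans (l1_mf_step_le _ _ _) _.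
  under eq_bigr => x _ do rewrite (ger0_norm (hma.1 x)).
  apply: (prob_avg_le hma) => x.
  under eq_bigr => u _ do rewrite (sum_norm_prob (hFb x u)) mulr1 !ffunE.
  by have := Pd x; rewrite /dTV; lra.
have measure_term : \sum_x' `|Dm x'| <= 2 * dTV ma mb.
  apply: le_trans (l1_mf_step_le _ _ _) _.
  under eq_bigr => x _ do
    under eq_bigr => u _ do rewrite (sum_norm_prob (hFb x u)) mulr1.
  under eq_bigr => x _ do rewrite (sum_norm_prob (hPb x)) mulr1 !ffunE.
  rewrite /dTV; lra.
have triangle : \sum_x' `|Dk x' + Dp x' + Dm x'|
    <= \sum_x' `|Dk x'| + \sum_x' `|Dp x'| + \sum_x' `|Dm x'|.
  rewrite -!big_split; apply: ler_sum => x' _.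
  by apply: le_trans (ler_normD _ _) _; rewrite lerD2r ler_normD.
lra.
Qed.

End MeanFieldStep.

Section Distances.
Variables (R : realFieldType) (X U : finType) (T : nat).

Lemma dTVxx (E : finType) (mu : {ffun E -> R}) : dTV mu mu = 0.
Proof. by rewrite /dTV big1 ?mulr0 // => e _; rewrite subrr normr0. Qed.

Lemma dPi_ge0 (pa pb : policy R X U) : 0 <= dPi T pa pb.
Proof. exact: bigmax_ge_id. Qed.

Lemma dTV_le_dPi (pa pb : policy R X U) t x :
  (t < T)%N -> dTV (pa t x) (pb t x) <= dPi T pa pb.
Proof.
move=> tT; apply: le_trans (le_bigmax _ _ (Ordinal tT)).
exact: (le_bigmax _ (fun x => dTV (pa t x) (pb t x)) x).
Qed.

End Distances.

Section Flow.
Variables (R : realFieldType) (X U : finType) (T : nat) (f : kernel R X U).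
Hypothesis f_prob :
  forall t x u mu, (t < T)%N -> is_prob mu -> is_prob (f t x u mu).

Lemma flow_prob (pi : policy R X U) (mu0 : {ffun X -> R}) :
  is_policy T pi -> is_prob mu0 ->
  forall t, (t <= T)%N -> is_prob (flow f pi mu0 t).
Proof.
move=> hpi hmu0; elim=> [//|t IH] tT.
have mu_prob := IH (ltnW tT).
by apply: mf_step_prob => // [x u|x]; [exact: f_prob | exact: hpi].
Qed.

Variable Lf : R.
Hypothesis Lf_ge0 : 0 <= Lf.
Hypothesis f_Lipschitz : forall t x u mu mu', (t < T)%N ->
  is_prob mu -> is_prob mu' ->
  \sum_x' `|f t x u mu x' - f t x u mu' x'| <= Lf * dTV mu mu'.

Lemma dTV_flow_le (pa pb : policy R X U) (mu0 : {ffun X -> R}) :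
  is_policy T pa -> is_policy T pb -> is_prob mu0 ->
  forall t, (t <= T)%N -> dTV (flow f pa mu0 t) (flow f pb mu0 t)
    <= (\sum_(i < t) ((Lf + 2) / 2) ^+ i) * dPi T pa pb.
Proof.
move=> hpa hpb hmu0; apply: le_geometric_recursion.
- by rewrite divr_ge0 // addr_ge0.
- by rewrite dTVxx.
move=> t tT.
have pa_flow := flow_prob hpa hmu0 (ltnW tT).
have pb_flow := flow_prob hpb hmu0 (ltnW tT).
apply: dTV_mf_step => // [x u|x|x|x u|x].
- exact: f_prob.
- exact: hpa.
- exact: hpb.
- exact: f_Lipschitz.
- exact: dTV_le_dPi.
Qed.

End Flow.

Theorem lemma5 (R : realFieldType) (X U : finType) (x0 : X) (u0 : U)
  (T : nat) (hT : (1 <= T)%N) (Rmax Lf Lr : R)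
  (f : kernel R X U) (r : reward R X U)
  (hLf : 0 < Lf) (hLr : 0 < Lr)
  (hfprob : forall t x u mu, (t < T)%N -> is_prob mu -> is_prob (f t x u mu))
  (hrbd : forall t x u mu, (t < T)%N -> is_prob mu ->
     `|r t x u mu| <= Rmax)
  (hfLip : forall t x u mu mu', (t < T)%N -> is_prob mu -> is_prob mu' ->
     \sum_(x' : X) `|f t x u mu x' - f t x u mu' x'| <= Lf * dTV mu mu')
  (hrLip : forall t x u mu mu', (t < T)%N -> is_prob mu -> is_prob mu' ->
     `|r t x u mu - r t x u mu'| <= Lr * dTV mu mu')
  (K : nat) (M : 'I_K -> {ffun X -> R}) (hM : forall k, is_prob (M k)) :
  exists Kprop : R, 0 < Kprop /\
    forall pia pib : policy R X U, is_policy T pia -> is_policy T pib ->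
      dS T (Bprop f M pia) (Bprop f M pib) <= Kprop * dPi T pia pib.
Proof.
set c := (Lf + 2) / 2.
have c_ge0 : 0 <= c by rewrite divr_ge0 // addr_ge0 // ltW.
exists (\sum_(i < T) c ^+ i); split.
  apply: lt_le_trans (geometric_sum_widen c_ge0 hT).
  by rewrite big_ord1 expr0.
move=> pia pib hpia hpib.
have Kprop_dPi_ge0 : 0 <= (\sum_(i < T) c ^+ i) * dPi T pia pib.
  by rewrite mulr_ge0 ?dPi_ge0 // sumr_ge0 // => i _; rewrite exprn_ge0.
apply: bigmax_le => // k _; apply: bigmax_le => // t _.
have t_le_T : (t <= T)%N := ltnW (ltn_ord t).
apply: le_trans (dTV_flow_le hfprob (ltW hLf) hfLip hpia hpib (hM k) t_le_T) _.
by rewrite ler_wpM2r ?dPi_ge0 // geometric_sum_widen.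
Qed.
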